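(* The set $\{2,3\}$ is not a $\delta$-set.
   Context: All graphs are finite and simple; $d(u,v)$ denotes the usual graph distance (infinite between different components). For a set $J$ of nonnegative integers, a distance $J$-labeling of $G$ is a function $f:V(G)\to J$ with $f(V(G))=J$ such that whenever two distinct vertices $u,v$ satisfy $f(u)=f(v)=k$, we have $d(u,v)=k$. It is proper if every $k\in J\setminus\{0\}$ is the label of at least two vertices. A finite set $\Sigma$ of nonnegative integers is a $\delta$-set if there exists a graph admitting a proper distance $\Sigma$-labeling. *)

From mathcomp Require Import all_boot.
Set Implicit Arguments. Unset Strict Implicit. Unset Printing Implicit Defensive.

Definition simple_graph (T : finType) (e : rel T) : Prop :=
  symmetric e /\ irreflexive e.

Definition walk_len (T : finType) (e : rel T) (u v : T) (k : nat) : Prop :=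
  exists p : seq T, [/\ path e u p, last u p = v & size p = k].

(* d(u,v) = k (graph distance; infinite distance is never a nat). *)
Definition dist_is (T : finType) (e : rel T) (u v : T) (k : nat) : Prop :=
  walk_len e u v k /\ forall m, m < k -> ~ walk_len e u v m.

Definition distance_labeling (T : finType) (e : rel T) (J : seq nat)
  (f : T -> nat) : Prop :=
  (forall x, f x \in J) /\ (forall k, k \in J -> exists x, f x = k) /\
  (forall u v k, u != v -> f u = k -> f v = k -> dist_is e u v k).

Definition proper_distance_labeling (T : finType) (e : rel T) (J : seq nat)
  (f : T -> nat) : Prop :=
  distance_labeling e J f /\
  (forall k, k \in J -> k != 0 -> exists u v, [/\ u != v, f u = k & f v = k]).

Definition delta_set (J : seq nat) : Prop :=
  exists (T : finType) (e : rel T) (f : T -> nat),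
    simple_graph e /\ proper_distance_labeling e J f.

(* A walk of length 3 between two vertices labelled 3 passes through two
   adjacent interior vertices.  Since 1 is not a label, adjacent vertices carry
   different labels, so both interior vertices, each adjacent to an endpoint
   labelled 3, are labelled 2 -- and they are adjacent to each other. *)
From mathcomp Require Import all_boot.

Set Implicit Arguments. Unset Strict Implicit. Unset Printing Implicit Defensive.

Lemma walk_len0 (T : finType) (e : rel T) (u v : T) :
  walk_len e u v 0 -> u = v.
Proof. by case=> [[|? ?] [_ <-]]. Qed.

Lemma walk_len3 (T : finType) (e : rel T) (u v : T) :
  walk_len e u v 3 -> exists a b, [/\ e u a, e a b & e b v].
Proof.
case=> [[|a [|b [|c [|? ?]]]] [walk <- //]].
by move: walk => /and4P [ua ab bc _]; exists a, b.
Qed.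

Lemma labeling_adj_neq (T : finType) (e : rel T) (J : seq nat) (f : T -> nat)
    (x y : T) :
  irreflexive e -> distance_labeling e J f -> 1 \notin J ->
  e x y -> f x != f y.
Proof.
move=> irr [inJ [_ dist]] J1 exy; apply/eqP => fxy.
have xy : x != y by apply: contraTneq exy => ->; rewrite irr.
have [walk not_shorter] := dist x y (f x) xy erefl (esym fxy).
case: (ltngtP 1 (f x)) => [gt1 | | eq1].
- by apply: (not_shorter 1 gt1); exists [:: y]; rewrite /= exy.
- rewrite ltnS leqn0 => /eqP fx0; rewrite fx0 in walk.
  by rewrite (walk_len0 walk) eqxx in xy.
- by move: (inJ x); rewrite -eq1 (negbTE J1).
Qed.

Theorem mainTheorem10 : ~ delta_set [:: 2; 3].
Proof.
move=> [T [e [f [[_ irr] [lab twice]]]]].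
have adj_neq x y := @labeling_adj_neq T e _ f x y irr lab isT.
have label2 x : f x != 3 -> f x = 2.
  by have [inJ _] := lab; move: (inJ x); rewrite !inE => /orP [] /eqP ->.
have [u [v [uv fu fv]]] := twice 3 isT isT.
have [_ [_ dist]] := lab.
have [a [b [ua ab bv]]] := walk_len3 (proj1 (dist u v 3 uv fu fv)).
have fa : f a = 2 by apply: label2; rewrite eq_sym -fu adj_neq.
have fb : f b = 2 by apply: label2; rewrite -fv adj_neq.
by move: (adj_neq a b ab); rewrite fa fb.
Qed.
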